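(* Let $n\ge 1$, $d_1,\dots,d_n\ge 1$, $L_i\in\mathbb{C}^{d_i\times d_i}$ ($i=1,\dots,n$) and $C_{i,i-1}\in\mathbb{C}^{d_i\times d_{i-1}}$ ($i=2,\dots,n$). Assume: (i) each $L_i$ is invertible and diagonalizable, $L_iV_i=V_i\Lambda_i$ with $V_i$ invertible and $\Lambda_i=\mathrm{diag}(\lambda_{i,1},\dots,\lambda_{i,d_i})$; (ii) $\sigma(L_i)\cap\sigma(L_j)=\emptyset$ for all $i\neq j$; (iii) $\|L_1\|<\|L_2\|<\cdots<\|L_n\|\le 1$. Fix $i\in\{1,\dots,n\}$ and $s_i\in\{1,\dots,d_i\}$. Then $\Psi_{i,s_i}\circ\mathsf{pert}$ is an eigenfunction of the Koopman operator $\mathcal U_{\mathsf{Lin}}$ (defined by $\mathcal U_{\mathsf{Lin}}f=f\circ\mathsf{Lin}$) at eigenvalue $\lambda_{i,s_i}$, i.e. $\Psi_{i,s_i}(\mathsf{pert}(\mathsf{Lin}(x)))=\lambda_{i,s_i}\Psi_{i,s_i}(\mathsf{pert}(x))$ for all $x\in\mathbb{C}^{d_1}\times\cdots\times\mathbb{C}^{d_n}$.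
   Context: Each $\mathbb{C}^{d_i}$ carries a fixed norm, matrices carry the induced operator norm. $\mathsf{Lin}(x_1,\dots,x_n)=(L_1x_1,\;L_2x_2+C_{2,1}x_1,\;\dots,\;L_nx_n+C_{n,n-1}x_{n-1})$. The principal eigenfunction $\psi_{i,s}(x_i)=\hat e_s^{*}V_i^{-1}x_i$ ($\hat e_s$ the $s$-th standard basis vector of $\mathbb{C}^{d_i}$), and $\Psi_{i,s}(x_1,\dots,x_n)=\psi_{i,s}(x_i)$. Matrices $D_{i,j}$ ($1\le j\le i\le n$) are defined recursively in $i$: $D_{i,i}=I_{d_i}$; for $i\ge 2$, $1\le j\le i-1$, $[\tilde C_{i,j}]_{\ell,m}=[V_i^{-1}C_{i,i-1}D_{i-1,j}V_j]_{\ell,m}(1-\lambda_{j,m}/\lambda_{i,\ell})^{-1}$ and $D_{i,j}=L_i^{-1}V_i\tilde C_{i,j}V_j^{-1}$. Define $\mathsf{pert}_1(x_1)=x_1$, $\mathsf{pert}_i(x_1,\dots,x_i)=x_i+\sum_{j=1}^{i-1}(-1)^{i-1-j}D_{i,j}\mathsf{pert}_j(x_1,\dots,x_j)$ for $i\ge2$, and $\mathsf{pert}(x)=(\mathsf{pert}_1(x_1),\dots,\mathsf{pert}_n(x_1,\dots,x_n))$. *)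

From HB Require Import structures.
From mathcomp Require Import all_boot all_order all_algebra.
From mathcomp Require Import complex.
From mathcomp Require Import boolp classical_sets reals.
Set Implicit Arguments. Unset Strict Implicit. Unset Printing Implicit Defensive.
Import Order.TTheory GRing.Theory Num.Theory.
Local Open Scope ring_scope.
Local Open Scope classical_set_scope.

Definition cmod (R : realType) (a : R[i]) : R :=
  Num.sqrt (complex.Re a ^+ 2 + complex.Im a ^+ 2).

Definition is_norm (R : realType) (d : nat) (nu : 'cV[R[i]]_d -> R) : Prop :=
  [/\ forall x, 0 <= nu x,
      forall x, nu x = 0 -> x = 0,
      forall (a : R[i]) x, nu (a *: x) = cmod a * nu x
    & forall x y, nu (x + y) <= nu x + nu y].

Definition opnorm (R : realType) (d : nat) (nu : 'cV[R[i]]_d -> R)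
  (A : 'M[R[i]]_d) : R :=
  sup [set r : R | exists x : 'cV[R[i]]_d, x != 0 /\ r = nu (A *m x) / nu x].

(* ---- The block-bidiagonal linear system and the perturbation ----
   Indices are 0-based: block k (0 <= k < n) is paper's block k+1.
   d k = d_{k+1};  L k = L_{k+1};  V k = V_{k+1};  lam k s = lambda_{k+1,s+1};
   Cs k : 'M_(d k.+1, d k) is the paper's C_{k+2,k+1}. *)
Section Pert.
Variables (R : realType) (d : nat -> nat).
Variables (L V : forall k, 'M[R[i]]_(d k)) (lam : forall k, 'I_(d k) -> R[i]).
Variable Cs : forall k, 'M[R[i]]_(d k.+1, d k).

(* the identity matrix of size d i, seen in 'M_(d i, d j) (used only for j = i) *)
Definition idmx (i j : nat) : 'M[R[i]]_(d i, d j) := conform_mx 0 (1%:M : 'M_(d i)).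

(* Dmx i j = D_{i+1,j+1} for j <= i (and 0 for j > i, never used) *)
Fixpoint Dmx (i : nat) : forall j, 'M[R[i]]_(d i, d j) :=
  match i as i0 return forall j, 'M[R[i]]_(d i0, d j) with
  | 0 => fun j => if j == 0%N then idmx 0 j else 0
  | i'.+1 => fun j =>
      if j == i'.+1 then idmx i'.+1 j
      else if (j < i'.+1)%N then
        let M := invmx (V i'.+1) *m Cs i' *m Dmx i' j *m V j in
        let Ct := \matrix_(l < d i'.+1, m < d j)
                    (M l m * (1 - @lam j m / @lam i'.+1 l)^-1) in
        invmx (L i'.+1) *m V i'.+1 *m Ct *m invmx (V j)
      else 0
  end.

Definition Lin (x : forall k, 'cV[R[i]]_(d k)) : forall k, 'cV[R[i]]_(d k) :=
  fun k => match k as k0 return 'cV[R[i]]_(d k0) with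
           | 0 => L 0 *m x 0%N
           | k'.+1 => L k'.+1 *m x k'.+1 + Cs k' *m x k'
           end.

(* pert_aux m i: m is fuel; pert_aux m i = pert_{i+1} whenever m >= i *)
Fixpoint pert_aux (x : forall k, 'cV[R[i]]_(d k)) (m i : nat) : 'cV[R[i]]_(d i) :=
  match m with
  | 0 => x i
  | m'.+1 => x i + \sum_(j < i) ((-1) ^+ (i.-1 - j) *: (Dmx i j *m pert_aux x m' j))
  end.

Definition pert (x : forall k, 'cV[R[i]]_(d k)) (i : nat) : 'cV[R[i]]_(d i) :=
  pert_aux x i i.

Definition psi (i : nat) (s : 'I_(d i)) (y : 'cV[R[i]]_(d i)) : R[i] :=
  (invmx (V i) *m y) s 0.
Definition Psi (i : nat) (s : 'I_(d i)) (x : forall k, 'cV[R[i]]_(d k)) : R[i] :=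
  psi s (x i).

Definition Koopman (f : (forall k, 'cV[R[i]]_(d k)) -> R[i]) :
  (forall k, 'cV[R[i]]_(d k)) -> R[i] := fun x => f (Lin x).
End Pert.

From HB Require Import structures.
From mathcomp Require Import all_boot all_order all_algebra.
From mathcomp Require Import complex.
From mathcomp Require Import boolp classical_sets reals.
From mathcomp Require Import ring.
Import Order.TTheory GRing.Theory Num.Theory.
Set Implicit Arguments. Unset Strict Implicit. Unset Printing Implicit Defensive.
Local Open Scope ring_scope.

(* The change of coordinates [pert] conjugates [Lin] to the block-diagonal map
   diag(L_1, ..., L_n): the matrices D_{i,j} solve the Sylvester equations
   L_i D_{i,j} - D_{i,j} L_j = C_{i,i-1} D_{i-1,j}, which are uniquely solvable
   because L_i and L_j have disjoint spectra, and the recursion for D_{i,j}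
   writes that solution in the eigenbases of L_i and L_j.  Inverting the
   triangular relation between x and pert(x) and using these equations block by
   block gives pert(Lin x)_i = L_i pert(x)_i.  Finally psi_{i,s} is the
   coordinate along the s-th row of V_i^{-1}, a left eigenvector of L_i for
   lambda_{i,s}. *)

Section Diagonalization.
Variables (F : fieldType) (p : nat) (L V : 'M[F]_p) (a : 'I_p -> F).
Hypotheses (V_unit : V \in unitmx) (LV : L *m V = V *m diag_mx (\row_k a k)).

Lemma invmx_diagonalization : invmx V *m L = diag_mx (\row_k a k) *m invmx V.
Proof. by rewrite -[LHS](mulmxK V_unit) -(mulmxA (invmx V)) LV !mulmxA mulVmx ?mul1mx. Qed.

Lemma row_invmx_eigen (s : 'I_p) : row s (invmx V) *m L = a s *: row s (invmx V).
Proof.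
rewrite -row_mul invmx_diagonalization mul_diag_mx.
by apply/rowP => j; rewrite !mxE.
Qed.

Lemma eigenvalue_diagonalized (s : 'I_p) : eigenvalue L (a s).
Proof.
apply/eigenvalueP; exists (row s (invmx V)); first exact: row_invmx_eigen.
apply/negP => /eqP row0.
have := congr1 (fun v => (v *m V) 0 s) row0.
by rewrite -row_mul mulVmx // mul0mx !mxE eqxx; apply/eqP; rewrite oner_eq0.
Qed.

Lemma coord_invmx_eigen (s : 'I_p) (y : 'cV[F]_p) :
  (invmx V *m (L *m y)) s 0 = a s * (invmx V *m y) s 0.
Proof.
by rewrite mulmxA invmx_diagonalization -mulmxA mul_diag_mx !mxE.
Qed.

End Diagonalization.

Lemma eigenvalue_unitmx_neq0 (F : fieldType) (p : nat) (A : 'M[F]_p) (c : F) :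
  A \in unitmx -> eigenvalue A c -> c != 0.
Proof.
move=> A_unit /eigenvalueP [v vA v_neq0]; apply: contraNneq v_neq0 => c0.
by rewrite -(mulmxK A_unit v) vA c0 scale0r mul0mx.
Qed.

Section Sylvester.
Variables (F : fieldType) (p q : nat).
Variables (Li Vi : 'M[F]_p) (Lj Vj : 'M[F]_q) (ai : 'I_p -> F) (aj : 'I_q -> F).

(* [Vi^-1 (sylvester_sol C) Vj] has entries [M_lm / (ai_l - aj_m)], the solution
   of the Sylvester equation in the eigenbases; the shape is that of the
   recursion defining [Dmx]. *)
Definition sylvester_sol (C : 'M[F]_(p, q)) : 'M[F]_(p, q) :=
  let M := invmx Vi *m C *m Vj in
  invmx Li *m Vi *m \matrix_(l, m) (M l m * (1 - aj m / ai l)^-1) *m invmx Vj.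

Hypotheses (Li_unit : Li \in unitmx) (Vi_unit : Vi \in unitmx) (Vj_unit : Vj \in unitmx).
Hypotheses (LVi : Li *m Vi = Vi *m diag_mx (\row_k ai k))
           (LVj : Lj *m Vj = Vj *m diag_mx (\row_k aj k)).
Hypothesis spectra_disjoint : forall c, ~~ (eigenvalue Li c && eigenvalue Lj c).

Lemma sylvester_solP (C : 'M[F]_(p, q)) :
  Li *m sylvester_sol C - sylvester_sol C *m Lj = C.
Proof.
have ai_neq0 l : ai l != 0.
  exact: eigenvalue_unitmx_neq0 Li_unit (eigenvalue_diagonalized Vi_unit LVi l).
have ai_neq_aj l m : ai l != aj m.
  apply: contraNneq (spectra_disjoint (ai l)) => eq_a.
  by rewrite (eigenvalue_diagonalized Vi_unit LVi) eq_a (eigenvalue_diagonalized Vj_unit LVj).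
rewrite /sylvester_sol; set M := invmx Vi *m C *m Vj; set X := \matrix_(l, m) _.
have XM : X *m diag_mx (\row_k aj k) = diag_mx (\row_k ai k) *m (X - M).
  rewrite mul_mx_diag mul_diag_mx; apply/matrixP => l m; rewrite !mxE.
  by field; rewrite ai_neq0 subr_eq0 ai_neq_aj.
have -> : Li *m (invmx Li *m Vi *m X *m invmx Vj) = Vi *m X *m invmx Vj.
  by rewrite !mulmxA mulmxV // mul1mx.
have -> : invmx Li *m Vi *m X *m invmx Vj *m Lj = Vi *m (X - M) *m invmx Vj.
  rewrite -mulmxA (invmx_diagonalization Vj_unit LVj) !mulmxA -(mulmxA _ X) XM.
  by rewrite !mulmxA -(mulmxA _ Vi) -LVi !mulmxA mulVmx // mul1mx.
rewrite -mulmxBl -mulmxBr opprB addrC subrK /M.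
by rewrite !mulmxA mulmxV // mul1mx mulmxK.
Qed.

End Sylvester.

Section Perturbation.
Variables (R : realType) (d : nat -> nat).
Variables (L V : forall k, 'M[R[i]]_(d k)) (lam : forall k, 'I_(d k) -> R[i]).
Variable Cs : forall k, 'M[R[i]]_(d k.+1, d k).

Local Notation D := (Dmx L V lam Cs).
Local Notation P := (pert L V lam Cs).

Lemma Dmx_id i : D i i = 1%:M.
Proof. by case: i => [|i] /=; rewrite ?eqxx /idmx conform_mx_id. Qed.

Lemma DmxSE i j : (j < i.+1)%N ->
  D i.+1 j = sylvester_sol (L i.+1) (V i.+1) (V j) (@lam i.+1) (@lam j) (Cs i *m D i j).
Proof. by move=> lt_ji; rewrite /= (ltn_eqF lt_ji) lt_ji /sylvester_sol mulmxA. Qed.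

Lemma pert_auxE x m i : (i <= m)%N -> pert_aux L V lam Cs x m i = P x i.
Proof.
elim/ltn_ind: i m => i IH [|m] le_im; first by move: le_im; rewrite leqn0 => /eqP ->.
case: i IH le_im => [|i] IH le_im; first by rewrite /pert /= big_ord0 addr0.
rewrite /pert /=; congr (_ + _); apply: eq_bigr => j _; congr (_ *: (_ *m _)).
by rewrite !IH // -ltnS (leq_trans (ltn_ord j)).
Qed.

Lemma pertS x i : P x i.+1 =
  x i.+1 + \sum_(j < i.+1) (-1) ^+ (i - j) *: (D i.+1 j *m P x j).
Proof.
rewrite {1}/pert /=; congr (_ + _); apply: eq_bigr => j _.
by rewrite pert_auxE // -ltnS.
Qed.

Lemma sum_Dmx_pert x i :
  x i = \sum_(j < i.+1) (-1) ^+ (i - j) *: (D i j *m P x j).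
Proof.
rewrite big_ord_recr /= subnn expr0 scale1r Dmx_id mul1mx.
case: i => [|i]; first by rewrite big_ord0 add0r.
rewrite pertS addrCA -big_split /= big1 ?addr0 // => j _.
by rewrite subSn 1?exprS ?mulN1r ?scaleNr ?addNr // -ltnS.
Qed.

Variable n : nat.
Hypotheses (L_unit : forall k, (k < n)%N -> L k \in unitmx)
           (V_unit : forall k, (k < n)%N -> V k \in unitmx).
Hypothesis LV : forall k, (k < n)%N -> L k *m V k = V k *m diag_mx (\row_s @lam k s).
Hypothesis spectra_disjoint : forall k l, (k < n)%N -> (l < n)%N -> k != l ->
  forall a : R[i], ~~ (eigenvalue (L k) a && eigenvalue (L l) a).

Lemma Dmx_sylvester i j : (i.+1 < n)%N -> (j < i.+1)%N ->
  L i.+1 *m D i.+1 j - D i.+1 j *m L j = Cs i *m D i j.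
Proof.
move=> lt_in lt_ji; have lt_jn := ltn_trans lt_ji lt_in.
rewrite DmxSE //; apply: sylvester_solP; rewrite ?L_unit ?V_unit ?LV //.
by apply: spectra_disjoint; rewrite // gtn_eqF.
Qed.

Lemma pert_Lin x i : (i < n)%N -> P (Lin L Cs x) i = L i *m P x i.
Proof.
elim/ltn_ind: i => -[|i] IH lt_in //.
rewrite !pertS mulmxDr (_ : Lin L Cs x i.+1 = L i.+1 *m x i.+1 + Cs i *m x i) //.
rewrite (_ : \sum_(j < i.+1) _ = L i.+1 *m \sum_(j < i.+1)
            (-1) ^+ (i - j) *: (D i.+1 j *m P x j) - Cs i *m x i).
  by rewrite addrACA subrr addr0.
rewrite [x i](sum_Dmx_pert x i) !mulmx_sumr -sumrB; apply: eq_bigr => j _.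
rewrite IH ?(ltn_trans (ltn_ord j) lt_in) // -!scalemxAr -scalerBr !mulmxA -mulmxBl.
by rewrite -(Dmx_sylvester lt_in) // opprB addrC subrK.
Qed.

End Perturbation.

Theorem corollary2 (R : realType) (n : nat) (d : nat -> nat)
  (L V : forall k, 'M[R[i]]_(d k)) (lam : forall k, 'I_(d k) -> R[i])
  (Cs : forall k, 'M[R[i]]_(d k.+1, d k))
  (nrm : forall k, 'cV[R[i]]_(d k) -> R) :
  (0 < n)%N ->
  (forall k, (k < n)%N -> (0 < d k)%N) ->
  (forall k, (k < n)%N -> is_norm (nrm k)) ->
  (forall k, (k < n)%N -> L k \in unitmx) ->
  (forall k, (k < n)%N -> V k \in unitmx) ->
  (forall k, (k < n)%N -> L k *m V k = V k *m diag_mx (\row_s lam k s)) ->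
  (forall k l, (k < n)%N -> (l < n)%N -> k != l ->
     forall a : R[i], ~~ (eigenvalue (L k) a && eigenvalue (L l) a)) ->
  (forall k, (k.+1 < n)%N -> opnorm (nrm k) (L k) < opnorm (nrm k.+1) (L k.+1)) ->
  opnorm (nrm n.-1) (L n.-1) <= 1 ->
  forall (i0 : nat) (s : 'I_(d i0)), (i0 < n)%N ->
  forall x : forall k, 'cV[R[i]]_(d k),
    Koopman L Cs (fun y => Psi V s (pert L V lam Cs y)) x
    = lam i0 s * Psi V s (pert L V lam Cs x).
Proof.
move=> _ _ _ L_unit V_unit LV spectra_disjoint _ _ i0 s lt_i0n x.
rewrite /Koopman /Psi /psi (pert_Lin Cs L_unit V_unit LV spectra_disjoint x lt_i0n).
exact: coord_invmx_eigen (V_unit _ lt_i0n) (LV _ lt_i0n) s _.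
Qed.
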